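(* Let $\mathbb{T}$ be a time scale and $\alpha\in(0,1]$. Let $f:\mathbb{R}\to\mathbb{R}$ be continuously differentiable and let $g:\mathbb{T}\to\mathbb{R}$ be continuous on $\mathbb{T}^k$. If $g$ is nabla fractional differentiable of order $\alpha$ at $t\in\mathbb{T}^k$, then $f\circ g:\mathbb{T}\to\mathbb{R}$ is nabla fractional differentiable of order $\alpha$ at $t$ and $$\nabla^{(\alpha)}(f\circ g)(t)=\int_0^1 f'\big(g(\rho(t))+\varphi\,(\nu(t))^{\alpha}\,\nabla^{(\alpha)}g(t)\big)\,d\varphi\cdot\nabla^{(\alpha)}g(t).$$
   Context: A time scale $\mathbb{T}$ is a nonempty closed subset of $\mathbb{R}$ with the relative topology. For $t\in\mathbb{T}$: $\rho(t)=\sup\{s\in\mathbb{T}:s<t\}$, $\sigma(t)=\inf\{s\in\mathbb{T}:s>t\}$, $\nu(t)=t-\rho(t)$. If $\mathbb{T}$ has a minimum $m$ with $\sigma(m)>m$ then $\mathbb{T}^k=\mathbb{T}\setminus\{m\}$, else $\mathbb{T}^k=\mathbb{T}$. $U_\delta(t)=(t-\delta,t+\delta)\cap\mathbb{T}$, $U^-_\delta(t)=(t-\delta,t)\cap\mathbb{T}$. Let $Q=\{1/q: q \text{ an odd positive integer}\}$; for $\alpha\in Q$, $x^\alpha$ is the real $q$-th root. Definition: $h:\mathbb{T}\to\mathbb{R}$ is nabla fractional differentiable of order $\alpha$ at $t\in\mathbb{T}^k$ if there is $L\in\mathbb{R}$ such that for every $\varepsilon>0$ there is $\delta>0$ with $|[h(\rho(t))-h(s)]-L[\rho(t)-s]^\alpha|\le\varepsilon|\rho(t)-s|^\alpha$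 for all $s\in U_\delta(t)$ if $\alpha\in Q$, resp. all $s\in U^-_\delta(t)$ if $\alpha\notin Q$; then $\nabla^{(\alpha)}h(t):=L$. *)

From Stdlib Require Import Reals.
From Coquelicot Require Import Coquelicot.
Open Scope R_scope.

Definition time_scale (T : R -> Prop) : Prop :=
  (exists x, T x) /\ closed T.

(* rho(t) = sup {s in T | s < t}; by the standard convention sup of the
   empty set is taken so that rho(t) = t (t = min T). *)
Definition rho (T : R -> Prop) (t : R) : R :=
  match Lub_Rbar (fun s => T s /\ s < t) with
  | Finite r => r
  | _ => t
  end.

(* sigma(t) = inf {s in T | s > t}; sigma(max T) = max T by convention. *)
Definition sigma (T : R -> Prop) (t : R) : R :=
  match Glb_Rbar (fun s => T s /\ t < s) with
  | Finite r => r
  | _ => t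
  end.

Definition nu (T : R -> Prop) (t : R) : R := t - rho T t.

Definition Tk (T : R -> Prop) (t : R) : Prop :=
  T t /\ ~ ((forall s, T s -> t <= s) /\ t < sigma T t).

Definition inQ (a : R) : Prop :=
  exists q : nat, Nat.odd q = true /\ a = / INR q.

(* x^a : for x > 0 the usual real power, 0^a = 0, and for x < 0 with a in Q
   the real odd root  -(-x)^a ; otherwise (never used) 0. *)
Definition fpow (a x : R) : R :=
  match Rlt_dec 0 x with
  | left _ => Rpower x a
  | right _ =>
      match Req_EM_T x 0 with
      | left _ => 0
      | right _ => - Rpower (- x) a
      end
  end.

Definition nabla_frac_diff (T : R -> Prop) (a : R) (h : R -> R) (t L : R)
  : Prop :=
  Tk T t /\
  forall eps : R, 0 < eps -> exists delta : R, 0 < delta /\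
    forall s : R, T s -> Rabs (s - t) < delta -> (inQ a \/ s < t) ->
      Rabs ((h (rho T t) - h s) - L * fpow a (rho T t - s))
        <= eps * fpow a (Rabs (rho T t - s)).

Definition cont_on_Tk (T : R -> Prop) (g : R -> R) : Prop :=
  forall t, Tk T t -> forall eps, 0 < eps -> exists delta, 0 < delta /\
    forall s, T s -> Rabs (s - t) < delta -> Rabs (g s - g t) < eps.

From Stdlib Require Import Reals Lra Classical.
From Coquelicot Require Import Coquelicot.
Open Scope R_scope.

(* Let u = g(rho t) and c = nu(t)^a D. Write f(u) - f(v) = Q(v) (u - v), where Q is the
   slope of f at u, extended by f'(u) at v = u; it is continuous because f is
   differentiable, and the fundamental theorem of calculus gives
   int_0^1 f'(u + phi c) dphi = Q(u + c). Along the points s admissible in the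
   definition, g(s) -> u + c, hence Q(g s) -> Q(u + c); multiplying the expansion
   g(rho t) - g(s) = D (rho t - s)^a + o(|rho t - s|^a) by Q(g s) gives the chain rule. *)

Lemma fpow_0 a : fpow a 0 = 0.
Proof.
  unfold fpow. destruct (Rlt_dec 0 0); [lra|].
  destruct (Req_EM_T 0 0); lra.
Qed.

Lemma fpow_opp a x : fpow a (- x) = - fpow a x.
Proof.
  unfold fpow.
  destruct (Rlt_dec 0 (- x)), (Rlt_dec 0 x); try lra;
    repeat destruct (Req_EM_T _ 0); rewrite ?Ropp_involutive; lra.
Qed.

Lemma Rabs_fpow a x : Rabs (fpow a x) = fpow a (Rabs x).
Proof.
  assert (Hpos : forall y, 0 < y -> fpow a y = Rpower y a).
  { intros y Hy. unfold fpow. destruct (Rlt_dec 0 y); lra. }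
  destruct (Rtotal_order x 0) as [Hx|[->|Hx]].
  - assert (Hneg : fpow a x = - fpow a (- x))
      by now rewrite fpow_opp, Ropp_involutive.
    rewrite Hneg, Rabs_Ropp, (Rabs_left x Hx), Hpos by lra.
    apply Rabs_pos_eq, Rlt_le, exp_pos.
  - now rewrite Rabs_R0, fpow_0, Rabs_R0.
  - rewrite (Rabs_right x), Hpos by lra. apply Rabs_pos_eq, Rlt_le, exp_pos.
Qed.

Lemma eq0_of_Rabs_le_eps_mul x p :
  (forall eps, 0 < eps -> Rabs x <= eps * p) -> x = 0.
Proof.
  intros H. apply Rabs_eq_0, Rle_antisym; [|apply Rabs_pos].
  apply Rle_plus_epsilon. intros eps Heps. rewrite Rplus_0_l.
  destruct (Rle_lt_dec p 0) as [Hp|Hp].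
  - specialize (H 1 Rlt_0_1). lra.
  - specialize (H (eps / p) (Rdiv_lt_0_compat _ _ Heps Hp)).
    unfold Rdiv in H. rewrite Rmult_assoc, Rinv_l, Rmult_1_r in H; lra.
Qed.

(* The value at v = u makes [slope f u] continuous. *)
Definition slope (f : R -> R) (u v : R) : R :=
  if Req_EM_T v u then Derive f u else (f v - f u) / (v - u).

Lemma slope_spec f u v : f u - f v = slope f u v * (u - v).
Proof.
  unfold slope. destruct (Req_EM_T v u) as [->|Hvu].
  - ring.
  - field. lra.
Qed.

Lemma continuous_slope f u v :
  (forall x, ex_derive f x) -> continuous (slope f u) v.
Proof.
  intros Hf. destruct (Req_EM_T v u) as [->|Hvu].
  - apply filterlim_locally. intros eps.
    destruct (proj1 (is_derive_Reals f u _) (Derive_correct f u (Hf u)) eps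
      (cond_pos eps)) as [delta Hdelta].
    exists delta. intros v Hv. change (Rabs (slope f u v - slope f u u) < eps).
    change (Rabs (v - u) < delta) in Hv.
    unfold slope. destruct (Req_EM_T u u) as [_|]; [|congruence].
    destruct (Req_EM_T v u) as [->|Hvu].
    + rewrite Rminus_diag, Rabs_R0. apply cond_pos.
    + replace v with (u + (v - u)) at 1 by ring. apply Hdelta; lra.
  - assert (Hne : locally v (fun w => w <> u)).
    { exists (mkposreal _ (Rabs_pos_lt _ (Rminus_eq_contra _ _ Hvu))).
      intros w Hw Hwu. subst w. change (Rabs (u - v) < Rabs (v - u)) in Hw.
      rewrite Rabs_minus_sym in Hw. lra. }
    apply (continuous_ext_loc _ (fun w => (f w - f u) * / (w - u))).
    + apply (filter_imp _ _) with (2 := Hne). intros w Hw. unfold slope.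
      destruct (Req_EM_T w u); [contradiction|reflexivity].
    + apply (continuous_mult (fun w => f w - f u)).
      * apply (continuous_minus f (fun _ => f u)).
        -- apply ex_derive_continuous, Hf.
        -- apply continuous_const.
      * apply continuous_Rinv_comp; [|lra].
        apply (continuous_minus (fun w => w) (fun _ => u)).
        -- apply continuous_id.
        -- apply continuous_const.
Qed.

Lemma RInt_Derive_segment f u c :
  (forall x, ex_derive f x) -> (forall x, continuous (Derive f) x) ->
  RInt (fun phi => Derive f (u + phi * c)) 0 1 = slope f u (u + c).
Proof.
  intros Hf Hf'. unfold slope. destruct (Req_EM_T (u + c) u) as [Hc|Hc].
  - replace c with 0 by lra.
    rewrite (RInt_ext _ (fun _ => Derive f u)) by (intros x _; f_equal; ring).
    rewrite RInt_const. compute; ring.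
  - replace (u + c - u) with c by ring. assert (Hc0 : c <> 0) by lra.
    apply is_RInt_unique.
    replace ((f (u + c) - f u) / c)
      with (f (u + 1 * c) / c - f (u + 0 * c) / c)
      by (rewrite Rmult_1_l, Rmult_0_l, Rplus_0_r; field; exact Hc0).
    apply (is_RInt_derive (fun p => f (u + p * c) / c)).
    + intros x _. auto_derive; [apply Hf|].
      change (Derive (fun y => f y)) with (Derive f). field. exact Hc0.
    + intros x _. apply (continuous_comp (fun p => u + p * c) (Derive f)); [|apply Hf'].
      apply (continuous_plus (fun _ => u) (fun p => p * c)); [apply continuous_const|].
      apply (continuous_scal_l (fun p => p) c), continuous_id.
Qed.

Lemma rho_le T t : rho T t <= t.
Proof.
  unfold rho. destruct (Lub_Rbar_correct (fun s => T s /\ s < t)) as [_ Hlub].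
  destruct (Lub_Rbar (fun s => T s /\ s < t)) eqn:E; try lra.
  apply (Hlub (Finite t)). intros s [_ Hs]. simpl. lra.
Qed.

Lemma le_rho T t s : T s -> s < t -> s <= rho T t.
Proof.
  intros Hs Hst. unfold rho.
  destruct (Lub_Rbar_correct (fun s => T s /\ s < t)) as [Hub _].
  specialize (Hub s (conj Hs Hst)).
  destruct (Lub_Rbar (fun s => T s /\ s < t)); simpl in Hub; lra.
Qed.

Section NablaApproach.

Variables (T : R -> Prop) (a t : R).

(* The filter of the points s admissible in [nabla_frac_diff]: by conversion,
   [nabla_frac_diff T a h t L] is [Tk T t] together with, for every eps > 0,
   [nabla_approach (fun s => |h (rho t) - h s - L (rho t - s)^a| <= eps |rho t - s|^a)]. *)
Definition nabla_approach (P : R -> Prop) : Prop :=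
  exists delta, 0 < delta /\
    forall s, T s -> Rabs (s - t) < delta -> (inQ a \/ s < t) -> P s.

Global Instance nabla_approach_filter : Filter nabla_approach.
Proof.
  constructor.
  - exists 1. split; [lra|]. tauto.
  - intros P Q [dP [HdP HP]] [dQ [HdQ HQ]].
    exists (Rmin dP dQ). split; [now apply Rmin_pos|].
    intros s Hs Hst Hdir. split.
    + apply HP; auto. eapply Rlt_le_trans; [exact Hst|apply Rmin_l].
    + apply HQ; auto. eapply Rlt_le_trans; [exact Hst|apply Rmin_r].
  - intros P Q HPQ [d [Hd HP]]. exists d. split; auto.
Qed.

Lemma nabla_approach_at : inQ a -> T t ->
  forall P, nabla_approach P -> P t.
Proof.
  intros Ha Ht P [d [Hd HP]]. apply HP; auto.
  now rewrite Rminus_diag, Rabs_R0.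
Qed.

Lemma nabla_approach_empty : ~ inQ a -> rho T t < t -> nabla_approach (fun _ => False).
Proof.
  intros Ha Hrho. exists (t - rho T t). split; [lra|].
  intros s Hs Hst [Ha'|Hslt]; [contradiction|].
  pose proof (le_rho T t s Hs Hslt). rewrite Rabs_left in Hst; lra.
Qed.

Lemma cont_on_Tk_filterlim g : cont_on_Tk T g -> Tk T t ->
  filterlim g nabla_approach (locally (g t)).
Proof.
  intros Hg Ht. apply filterlim_locally. intros eps.
  destruct (Hg t Ht eps (cond_pos eps)) as [d [Hd Hgd]].
  exists d. split; auto. intros s Hs Hst _. exact (Hgd s Hs Hst).
Qed.

End NablaApproach.

Lemma nabla_frac_diff_filterlim T a g t D :
  cont_on_Tk T g -> nabla_frac_diff T a g t D ->
  filterlim g (nabla_approach T a t) (locally (g (rho T t) + fpow a (nu T t) * D)).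
Proof.
  (* If a is in Q then s = t is admissible, which pins down g t; if not, either no
     admissible s is near t (rho t < t) or nu t = 0. *)
  intros Hg [Ht Hd]. destruct (classic (inQ a)) as [Ha|Ha].
  - assert (Hgt : g (rho T t) + fpow a (nu T t) * D = g t).
    { assert (H0 : g (rho T t) - g t - D * fpow a (rho T t - t) = 0).
      { apply (eq0_of_Rabs_le_eps_mul _ (fpow a (Rabs (rho T t - t)))).
        intros eps Heps. exact (nabla_approach_at T a t Ha (proj1 Ht) _ (Hd eps Heps)). }
      replace (rho T t - t) with (- nu T t) in H0 by (unfold nu; ring).
      rewrite fpow_opp in H0. lra. }
    rewrite Hgt. now apply cont_on_Tk_filterlim.
  - destruct (Rle_lt_or_eq_dec _ _ (rho_le T t)) as [Hlt|Heq].
    + intros P _. apply (filter_imp (fun _ => False)); [tauto|].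
      now apply nabla_approach_empty.
    + unfold nu. rewrite Heq, Rminus_diag, fpow_0, Rmult_0_l, Rplus_0_r.
      now apply cont_on_Tk_filterlim.
Qed.

Lemma filter_little_o_mul {U} {F : (U -> Prop) -> Prop} {FF : Filter F}
    (q x w p : U -> R) (q0 D : R) :
  filterlim q F (locally q0) ->
  (forall s, Rabs (w s) <= p s) ->
  (forall eps, 0 < eps -> F (fun s => Rabs (x s - D * w s) <= eps * p s)) ->
  forall eps, 0 < eps -> F (fun s => Rabs (q s * x s - q0 * D * w s) <= eps * p s).
Proof.
  intros Hq Hw Hx eps Heps.
  assert (Hnear : forall r, 0 < r -> F (fun s => Rabs (q s - q0) < r)).
  { intros r Hr. exact (proj1 (filterlim_locally q q0) Hq (mkposreal r Hr)). }
  set (B := Rabs q0 + 1). set (K := Rabs D + 1).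
  assert (HB : 0 < B) by (unfold B; pose proof (Rabs_pos q0); lra).
  assert (HK : 0 < K) by (unfold K; pose proof (Rabs_pos D); lra).
  assert (Hx' := Hx (eps / (2 * B)) ltac:(apply Rdiv_lt_0_compat; lra)).
  assert (Hq1 := Hnear 1 Rlt_0_1).
  assert (Hq2 := Hnear (eps / (2 * K)) ltac:(apply Rdiv_lt_0_compat; lra)).
  apply (filter_imp _ _) with (2 := filter_and _ _ Hq1 (filter_and _ _ Hq2 Hx')).
  intros s [H1 [H2 H3]].
  assert (Hp : 0 <= p s) by (eapply Rle_trans; [apply Rabs_pos|apply Hw]).
  assert (Hqs : Rabs (q s) <= B).
  { unfold B. replace (q s) with (q0 + (q s - q0)) by ring.
    pose proof (Rabs_triang q0 (q s - q0)). lra. }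
  replace (q s * x s - q0 * D * w s)
    with (q s * (x s - D * w s) + (q s - q0) * D * w s) by ring.
  eapply Rle_trans; [apply Rabs_triang|]. rewrite !Rabs_mult.
  assert (Hrem : Rabs (q s) * Rabs (x s - D * w s) <= eps / 2 * p s).
  { replace (eps / 2 * p s) with (B * (eps / (2 * B) * p s)) by (field; lra).
    apply Rmult_le_compat; auto using Rabs_pos. }
  assert (HqD : Rabs (q s - q0) * Rabs D <= eps / 2).
  { replace (eps / 2) with (eps / (2 * K) * K) by (field; lra).
    apply Rmult_le_compat; [apply Rabs_pos|apply Rabs_pos|lra|unfold K; lra]. }
  assert (HqDw : Rabs (q s - q0) * Rabs D * Rabs (w s) <= eps / 2 * p s).
  { apply Rmult_le_compat; auto using Rabs_pos.
    apply Rmult_le_pos; apply Rabs_pos. }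
  lra.
Qed.

Theorem mainTheorem6 (T : R -> Prop) (a : R) (f g : R -> R) (t D : R) :
  time_scale T ->
  0 < a <= 1 ->
  (forall x, ex_derive f x) ->
  (forall x, continuous (Derive f) x) ->
  cont_on_Tk T g ->
  Tk T t ->
  nabla_frac_diff T a g t D ->
  nabla_frac_diff T a (fun x => f (g x)) t
    (RInt (fun phi => Derive f (g (rho T t) + phi * fpow a (nu T t) * D)) 0 1
     * D).
Proof.
  intros _ _ Hf Hf' Hg Ht Hgd.
  set (u := g (rho T t)). set (c := fpow a (nu T t) * D).
  assert (Hint : RInt (fun phi => Derive f (u + phi * fpow a (nu T t) * D)) 0 1
                 = slope f u (u + c)).
  { rewrite <- RInt_Derive_segment by assumption.
    apply RInt_ext. intros phi _. unfold c. now rewrite Rmult_assoc. }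
  rewrite Hint. split; [exact Ht|]. intros eps Heps.
  assert (Hslope : filterlim (fun s => slope f u (g s)) (nabla_approach T a t)
                     (locally (slope f u (u + c)))).
  { apply (filterlim_comp _ _ _ g (slope f u) _ (locally (u + c))).
    - now apply nabla_frac_diff_filterlim.
    - now apply continuous_slope. }
  apply (filter_imp _ _) with
    (2 := filter_little_o_mul _ _ _ _ _ _ Hslope
            (fun s => Req_le _ _ (Rabs_fpow a (rho T t - s))) (proj2 Hgd) eps Heps).
  intros s. fold u. now rewrite (slope_spec f u (g s)).
Qed.
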